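(* The functions $\omega_\pm$ are smooth on $R\setminus\{p_0\}$, and as $(x,y)\to p_0=(2,0)$, $$\omega_\pm=\frac{(x-2)\pm\sqrt{(x-2)^2+32y^2}}{4}+O\big((x-2)^2+32y^2\big).$$ For $(x,y)\in R_+$ one has $0\le\omega_+(x,y)\le 2|y|$, and for $(x,y)\in R_-$ one has $-2|y|\le\omega_-(x,y)\le 0$. Moreover, for each wedge $V_a$ there is a constant $C>0$ such that $|\omega_\pm(x,y)|\ge C|y|$ for $(x,y)\in V_a$.
   Context: For $x>0$, $y\in\mathbb{R}$ let $r_1^2=4+x^2+4x^2y^2$, $\Delta=((x+2)^2+8x^2y^2)((x-2)^2+8x^2y^2)$ and $$\omega_\pm(x,y)=\frac{x^2-4\pm\sqrt{\Delta}}{2r_1^2}.$$ (These are the eigenvalues of the bottom $2\times2$ block of the $3\times3$ symmetric tridiagonal matrix with spectrum $\{-1,0,1\}$ having bidiagonal coordinates $(x,y)$.) Let $p_0=(2,0)$, $R=\{(x,y): x>0,\ 4-4y^2-x^2y^2-8x^2y^4\ge 0\}$, $R_+=R\cap((0,2]\times\mathbb{R})$, $R_-=R\cap([2,\infty)\times\mathbb{R})$. For $0<a\le 1/10$ the wedge of height $a$ is $V_a=\{(x,y): |y|\le a,\ |y|\ge|x-2|/10\}$. *)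

From HB Require Import structures.
From mathcomp Require Import all_boot all_order all_algebra.
From mathcomp Require Import all_classical all_reals topology normedtype derive.
Set Implicit Arguments. Unset Strict Implicit. Unset Printing Implicit Defensive.
Import Order.TTheory GRing.Theory Num.Theory.
Import numFieldNormedType.Exports.
Local Open Scope classical_set_scope.
Local Open Scope ring_scope.

Section Defs.
Variable R : realType.

Definition r1sq (x y : R) : R := 4 + x ^+ 2 + 4 * x ^+ 2 * y ^+ 2.

Definition Delta (x y : R) : R :=
  ((x + 2) ^+ 2 + 8 * x ^+ 2 * y ^+ 2) * ((x - 2) ^+ 2 + 8 * x ^+ 2 * y ^+ 2).

Definition omega_p (x y : R) : R := (x ^+ 2 - 4 + Num.sqrt (Delta x y)) / (2 * r1sq x y).
Definition omega_m (x y : R) : R := (x ^+ 2 - 4 - Num.sqrt (Delta x y)) / (2 * r1sq x y).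

Definition omega_p2 (p : R * R) : R := omega_p p.1 p.2.
Definition omega_m2 (p : R * R) : R := omega_m p.1 p.2.

Definition p0 : R * R := (2, 0).

Definition regionR : set (R * R) :=
  [set p | 0 < p.1 /\ 0 <= 4 - 4 * p.2 ^+ 2 - p.1 ^+ 2 * p.2 ^+ 2 - 8 * p.1 ^+ 2 * p.2 ^+ 4].
Definition regionRp : set (R * R) := [set p | regionR p /\ p.1 <= 2].
Definition regionRm : set (R * R) := [set p | regionR p /\ 2 <= p.1].

Definition wedge (a : R) : set (R * R) :=
  [set p | `|p.2| <= a /\ `|p.1 - 2| / 10 <= `|p.2|].

Fixpoint smooth_n (U : set (R * R)) (f : R * R -> R) (n : nat) : Prop :=
  (forall p, U p -> {for p, continuous f}) /\
  match n with
  | 0 => True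
  | n'.+1 => forall v : R * R,
      (forall p, U p -> derivable f p v) /\ smooth_n U ('D_v f) n'
  end.

Definition smooth_on (U : set (R * R)) (f : R * R -> R) : Prop :=
  open U /\ forall n, smooth_n U f n.

End Defs.

(* Both omega+ and omega- are closed-form in x, y and sqrt Delta, with a denominator
   2 r1^2 >= 8; they are therefore smooth wherever Delta > 0, and on x > 0 the two
   factors of Delta vanish together only at p0.
   Near p0 put q = sqrt((x-2)^2 + 32 y^2).  The factors of Delta are 16 + O(q) and
   q^2 + O(q^3), so sqrt Delta = 4 q + O(q^2), and substituting this into
   omega = (x^2 - 4 +- sqrt Delta) / (2 r1^2) gives the expansion.
   The sign bounds follow from |x^2 - 4| <= sqrt Delta <= |x^2 - 4| + 4 r1^2 |y|.
   On a wedge both numerators x^2 - 4 +- sqrt Delta are O(|y|), while their product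
   (x^2 - 4)^2 - Delta is below -80 y^2; hence each of them is at least a multiple of |y|. *)

From HB Require Import structures.
From mathcomp Require Import all_boot all_order all_algebra.
From mathcomp Require Import all_classical all_reals topology normedtype derive realfun.
From mathcomp Require Import ring lra.
Set Implicit Arguments. Unset Strict Implicit. Unset Printing Implicit Defensive.
Import Order.TTheory GRing.Theory Num.Theory.
Import numFieldNormedType.Exports.
Local Open Scope classical_set_scope.
Local Open Scope ring_scope.

Lemma norm_sub_le_of_sqr {R : realFieldType} (s t c : R) :
  0 <= s -> 0 <= t -> 0 <= c -> `|s ^+ 2 - t ^+ 2| <= c * t -> `|s - t| <= c.
Proof.
move=> s_ge0 t_ge0 c_ge0 le_ct.
have [t0|t_gt0] := eqVneq t 0.
  move: le_ct; rewrite t0 mulr0 expr0n /= subr0 normr_le0 sqrf_eq0 => /eqP ->.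
  by rewrite subr0 normr0.
have t_pos : 0 < t by rewrite lt_neqAle eq_sym t_gt0.
rewrite -(ler_pM2r t_pos) (le_trans _ le_ct) //.
have -> : s ^+ 2 - t ^+ 2 = (s - t) * (s + t) by ring.
rewrite normrM [`|s + t|]ger0_norm ?addr_ge0 //.
by apply: ler_wpM2l => //; lra.
Qed.

Lemma sqrt_perturb_bound {R : realFieldType} (a b t s : R) : 0 <= t -> t <= 1 ->
  `|a| <= 11 * t -> `|b| <= 2 * t ^+ 3 -> 0 <= s -> s ^+ 2 = (16 + a) * (t ^+ 2 + b) ->
  `|s - 4 * t| <= 17 * t ^+ 2.
Proof.
move=> t_ge0 t_le1 /ler_normlP[a_ge a_le] /ler_normlP[b_ge b_le] s_ge0 sqr_s.
apply: norm_sub_le_of_sqr; rewrite ?mulr_ge0 ?sqr_ge0 //.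
have -> : s ^+ 2 - (4 * t) ^+ 2 = 16 * b + a * t ^+ 2 + a * b by rewrite sqr_s; ring.
have t3_ge0 : 0 <= t ^+ 3 by rewrite exprn_ge0.
have t4_le : t ^+ 4 <= t ^+ 3 by rewrite exprSr ler_piMr.
have p1 : 0 <= (11 * t - a) * t ^+ 2 by rewrite mulr_ge0 ?sqr_ge0 //; lra.
have p2 : 0 <= (11 * t + a) * t ^+ 2 by rewrite mulr_ge0 ?sqr_ge0 //; lra.
have p3 : 0 <= (11 * t - a) * (2 * t ^+ 3 - b) by apply: mulr_ge0; lra.
have p4 : 0 <= (11 * t + a) * (2 * t ^+ 3 + b) by apply: mulr_ge0; lra.
have p5 : 0 <= (11 * t - a) * (2 * t ^+ 3 + b) by apply: mulr_ge0; lra.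
have p6 : 0 <= (11 * t + a) * (2 * t ^+ 3 - b) by apply: mulr_ge0; lra.
have e1 : t * t ^+ 2 = t ^+ 3 by ring.
have e2 : t * t ^+ 3 = t ^+ 4 by ring.
by rewrite ler_norml; apply/andP; split; lra.
Qed.

Lemma ler_norm_from_mul {R : realFieldType} (a b c d w : R) : 0 < c -> 0 <= w ->
  `|b| <= c * w -> d * w ^+ 2 <= `|a * b| -> d / c * w <= `|a|.
Proof.
move=> c_gt0 w_ge0 b_le ab_ge.
have [w0|w_neq0] := eqVneq w 0; first by rewrite w0 mulr0.
have w_gt0 : 0 < w by rewrite lt_neqAle eq_sym w_neq0.
rewrite mulrAC ler_pdivrMr // -(ler_pM2r w_gt0) -mulrA -expr2.
apply: le_trans ab_ge _.
by rewrite normrM -mulrA ler_wpM2l.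
Qed.

Lemma conjugate_quot_lower_bound {R : realFieldType} (e s r w : R) :
  0 <= w -> 4 <= r -> r <= 27 / 2 -> `|e| <= 50 * w -> 0 <= s -> s <= 104 * w ->
  80 * w ^+ 2 <= s ^+ 2 - e ^+ 2 ->
  1 / 100 * w <= `|(e + s) / (2 * r)| /\ 1 / 100 * w <= `|(e - s) / (2 * r)|.
Proof.
move=> w_ge0 r_ge4 r_le e_le s_ge0 s_le prod_ge.
have plus_le : `|e + s| <= 154 * w.
  by rewrite (le_trans (ler_normD _ _)) // (ger0_norm s_ge0); lra.
have minus_le : `|e - s| <= 154 * w.
  by rewrite (le_trans (ler_normB _ _)) // (ger0_norm s_ge0); lra.
have prod_norm : 80 * w ^+ 2 <= `|(e + s) * (e - s)|.
  have -> : (e + s) * (e - s) = - (s ^+ 2 - e ^+ 2) by ring.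
  by rewrite normrN ger0_norm //; have := sqr_ge0 w; lra.
have r2_gt0 : 0 < 2 * r by lra.
have wr_le := ler_wpM2l w_ge0 r_le.
have quot_ge (n : R) : 80 / 154 * w <= `|n| -> 1 / 100 * w <= `|n / (2 * r)|.
  by rewrite normrM normfV (gtr0_norm r2_gt0) ler_pdivlMr //; lra.
split; apply: quot_ge.
  exact: ler_norm_from_mul minus_le prod_norm.
by rewrite [(e + s) * _]mulrC in prod_norm; exact: ler_norm_from_mul plus_le prod_norm.
Qed.

Section ClosedFormExpressions.
Variable R : realType.
Implicit Types (p v : R * R) (U : set (R * R)).

Definition coord1 p : R := p.1.
Definition coord2 p : R := p.2.

Lemma coord1_linear : linear coord1. Proof. by []. Qed.
HB.instance Definition _ :=
  GRing.isLinear.Build R (R * R)%type R *:%R coord1 coord1_linear.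
Lemma coord2_linear : linear coord2. Proof. by []. Qed.
HB.instance Definition _ :=
  GRing.isLinear.Build R (R * R)%type R *:%R coord2 coord2_linear.

Lemma differentiable_coord1 p : differentiable coord1 p.
Proof. by apply: linear_differentiable => q; exact: cvg_fst. Qed.
Lemma differentiable_coord2 p : differentiable coord2 p.
Proof. by apply: linear_differentiable => q; exact: cvg_snd. Qed.

(* Closed-form expressions in the two coordinates.  [fexpr_dom e p] asks every
   inverse in [e] to be taken of a nonzero value and every square root of a
   positive one, so that the class is closed under directional derivation. *)
Inductive fexpr :=
  | FConst of R | FX | FY
  | FAdd of fexpr & fexpr | FMul of fexpr & fexpr | FInv of fexpr | FSqrt of fexpr.

Fixpoint fexpr_eval e p : R :=
  match e with
  | FConst c => c | FX => p.1 | FY => p.2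
  | FAdd a b => fexpr_eval a p + fexpr_eval b p
  | FMul a b => fexpr_eval a p * fexpr_eval b p
  | FInv a => (fexpr_eval a p)^-1
  | FSqrt a => Num.sqrt (fexpr_eval a p)
  end.

Fixpoint fexpr_dom e p : Prop :=
  match e with
  | FAdd a b | FMul a b => fexpr_dom a p /\ fexpr_dom b p
  | FInv a => fexpr_dom a p /\ fexpr_eval a p != 0
  | FSqrt a => fexpr_dom a p /\ 0 < fexpr_eval a p
  | _ => True
  end.

Fixpoint fexpr_derive v e :=
  match e with
  | FConst _ => FConst 0 | FX => FConst v.1 | FY => FConst v.2
  | FAdd a b => FAdd (fexpr_derive v a) (fexpr_derive v b)
  | FMul a b => FAdd (FMul (fexpr_derive v a) b) (FMul a (fexpr_derive v b))
  | FInv a => FMul (FConst (-1)) (FMul (fexpr_derive v a) (FInv (FMul a a)))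
  | FSqrt a => FMul (fexpr_derive v a) (FInv (FMul (FConst 2) (FSqrt a)))
  end.

Lemma differentiable_sqrt (t : R) : 0 < t -> differentiable (@Num.sqrt R) t.
Proof. by move=> t0; apply/derivable1_diffP; have [] := is_derive1_sqrt t0. Qed.

Lemma differentiable_fexpr e p : fexpr_dom e p -> differentiable (fexpr_eval e) p.
Proof.
elim: e => [c|||a IHa b IHb|a IHa b IHb|a IHa|a IHa] /=.
- by move=> _; exact: differentiable_cst.
- by move=> _; exact: differentiable_coord1.
- by move=> _; exact: differentiable_coord2.
- by case=> /IHa da /IHb db; exact: differentiableD.
- by case=> /IHa da /IHb db; exact: differentiableM.
- by case=> /IHa da an0; exact: differentiableV.
- by case=> /IHa da a_gt0; apply: differentiable_comp => //; exact: differentiable_sqrt.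
Qed.

Lemma fexpr_dom_derive v e p : fexpr_dom e p -> fexpr_dom (fexpr_derive v e) p.
Proof.
elim: e => [c|||a IHa b IHb|a IHa b IHb|a IHa|a IHa] //=.
- by case=> /IHa da /IHb db.
- by case=> da db; do !split => //; [exact: IHa | exact: IHb].
- by case=> da an0; do !split => //; [exact: IHa | rewrite mulf_neq0].
- case=> da a_gt0; do !split => //; first exact: IHa.
  by rewrite mulf_neq0 // gt_eqF // sqrtr_gt0.
Qed.

Lemma derive_fexpr v e p :
  fexpr_dom e p -> 'D_v (fexpr_eval e) p = fexpr_eval (fexpr_derive v e) p.
Proof.
have derivable_e a : fexpr_dom a p -> derivable (fexpr_eval a) p v.
  by move=> da; apply: diff_derivable; exact: differentiable_fexpr.
elim: e => [c|||a IHa b IHb|a IHa b IHb|a IHa|a IHa] /=.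
- by move=> _; exact: derive_cst.
- move=> _; rewrite (_ : (fun q => q.1) = coord1) // deriveE; last first.
    exact: differentiable_coord1.
  by rewrite diff_lin // => q; exact: cvg_fst.
- move=> _; rewrite (_ : (fun q => q.2) = coord2) // deriveE; last first.
    exact: differentiable_coord2.
  by rewrite diff_lin // => q; exact: cvg_snd.
- by case=> da db; rewrite deriveD ?IHa ?IHb //; exact: derivable_e.
- case=> da db; rewrite deriveM ?IHa ?IHb //; try exact: derivable_e.
  by rewrite /GRing.scale /=; ring.
- case=> da an0; rewrite deriveV ?IHa //; last exact: derivable_e.
  by rewrite /GRing.scale /= expr2; ring.
- case=> da a_gt0; have dsqrt := differentiable_sqrt a_gt0.
  have de := differentiable_fexpr da.
  rewrite (_ : (fun q => Num.sqrt _) = Num.sqrt \o fexpr_eval a) //.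
  rewrite deriveE; last exact: differentiable_comp.
  rewrite diff_comp // /= deriv1E; last exact/derivable1_diffP.
  by rewrite -deriveE // IHa // derive1E derive_sqrt.
Qed.

Lemma fexpr_dom_near e p : fexpr_dom e p -> \forall q \near p, fexpr_dom e q.
Proof.
elim: e => [c|||a IHa b IHb|a IHa b IHb|a IHa|a IHa] /=; try by move=> _; near=> q.
- case=> /IHa na /IHb nb; near=> q; split; near: q; [exact: na|exact: nb].
- case=> /IHa na /IHb nb; near=> q; split; near: q; [exact: na|exact: nb].
- case=> da an0; have na := IHa da.
  have nz : \forall q \near p, fexpr_eval a q != 0.
    by have /cvgr_neq0 := differentiable_continuous (differentiable_fexpr da); apply.
  near=> q; split; near: q; [exact: na|exact: nz].
- case=> da a_gt0; have na := IHa da.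
  have nz : \forall q \near p, 0 < fexpr_eval a q.
    by have /cvgr_gt := differentiable_continuous (differentiable_fexpr da); apply.
  near=> q; split; near: q; [exact: na|exact: nz].
Unshelve. all: by end_near.
Qed.

Section OnOpenSet.
Context {U : set (R * R)} {e : fexpr} {f : R * R -> R}.
Hypotheses (U_open : open U) (dom_e : forall p, U p -> fexpr_dom e p)
  (f_e : forall p, U p -> f p = fexpr_eval e p).

Lemma fexpr_eval_near p : U p -> \forall q \near p, fexpr_eval e q = f q.
Proof. by move=> Up; apply: filterS (open_nbhs_nbhs (conj U_open Up)) => q /f_e. Qed.

Lemma continuous_fexpr_on p : U p -> {for p, continuous f}.
Proof.
move=> Up; rewrite /prop_for /continuous_at (f_e Up).
apply: cvg_trans (near_eq_cvg (fexpr_eval_near Up)) _.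
exact/differentiable_continuous/differentiable_fexpr/dom_e.
Qed.

Lemma derivable_fexpr_on p v : U p -> derivable f p v.
Proof.
move=> Up; apply: near_eq_derivable (fexpr_eval_near Up) _.
exact/diff_derivable/differentiable_fexpr/dom_e.
Qed.

Lemma derive_fexpr_on p v :
  U p -> 'D_v f p = fexpr_eval (fexpr_derive v e) p.
Proof.
move=> Up; rewrite -(near_eq_derive _ (fexpr_eval_near Up)).
exact/derive_fexpr/dom_e.
Qed.

End OnOpenSet.

Lemma smooth_n_fexpr U n e f : open U ->
  (forall p, U p -> fexpr_dom e p) -> (forall p, U p -> f p = fexpr_eval e p) ->
  smooth_n U f n.
Proof.
move=> U_open; elim: n e f => [|n IH] e f dom_e f_e.
  by split=> // p; exact: (continuous_fexpr_on U_open dom_e f_e).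
split=> [p|v]; first exact: (continuous_fexpr_on U_open dom_e f_e).
split=> [p|]; first exact: (derivable_fexpr_on U_open dom_e f_e).
apply: (IH (fexpr_derive v e)) => [p /dom_e /fexpr_dom_derive //|p].
exact: (derive_fexpr_on U_open dom_e f_e).
Qed.

End ClosedFormExpressions.

Arguments FX {R}.
Arguments FY {R}.

Section DeltaFacts.
Variable R : realType.
Implicit Types x y : R.

Lemma r1sq_ge4 x y : 4 <= r1sq x y.
Proof. by rewrite /r1sq; have := sqr_ge0 x; have := mulr_ge0 (sqr_ge0 x) (sqr_ge0 y); lra. Qed.

Lemma DeltaE x y : Delta x y =
  (x ^+ 2 - 4) ^+ 2 + (8 * x ^+ 2 * y ^+ 2 * (2 * x ^+ 2 + 8) + 64 * (x ^+ 2 * y ^+ 2) ^+ 2).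
Proof. by rewrite /Delta; ring. Qed.

Lemma Delta_excess_ge0 x y :
  0 <= 8 * x ^+ 2 * y ^+ 2 * (2 * x ^+ 2 + 8) + 64 * (x ^+ 2 * y ^+ 2) ^+ 2.
Proof.
have := mulr_ge0 (mulr_ge0 (sqr_ge0 x) (sqr_ge0 y)) (sqr_ge0 x).
have := mulr_ge0 (sqr_ge0 x) (sqr_ge0 y); have := sqr_ge0 (x ^+ 2 * y ^+ 2).
by nra.
Qed.

Lemma Delta_ge0 x y : 0 <= Delta x y.
Proof. by rewrite DeltaE; have := Delta_excess_ge0 x y; have := sqr_ge0 (x ^+ 2 - 4); lra. Qed.

Lemma Delta_gt0 x y : 0 < x -> (x, y) <> (2, 0) -> 0 < Delta x y.
Proof.
move=> x_gt0 xy_neq; rewrite /Delta; apply: mulr_gt0.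
  by have := mulr_ge0 (sqr_ge0 x) (sqr_ge0 y); nra.
have [x2|x_neq2] := eqVneq x 2.
  have y_neq0 : y != 0 by apply/eqP => y0; apply: xy_neq; rewrite x2 y0.
  have : 0 < y ^+ 2 by rewrite exprn_even_gt0.
  by rewrite x2; nra.
have : 0 < (x - 2) ^+ 2 by rewrite exprn_even_gt0 // subr_eq0.
by have := mulr_ge0 (sqr_ge0 x) (sqr_ge0 y); nra.
Qed.

Lemma sqrt_Delta_ge x y : `|x ^+ 2 - 4| <= Num.sqrt (Delta x y).
Proof.
rewrite -sqrtr_sqr; apply: ler_wsqrtr; rewrite DeltaE.
by have := Delta_excess_ge0 x y; lra.
Qed.

Lemma sqrt_Delta_le x y :
  Num.sqrt (Delta x y) <= 4 * r1sq x y * `|y| + `|x ^+ 2 - 4|.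
Proof.
set w : R := `|y|; set e : R := `|x ^+ 2 - 4|.
have [w_ge0 e_ge0] : 0 <= w /\ 0 <= e by rewrite !normr_ge0.
have y2 : y ^+ 2 = w ^+ 2 by rewrite real_normK ?num_real.
have e2 : e ^+ 2 = (x ^+ 2 - 4) ^+ 2 by rewrite real_normK ?num_real.
have bound_ge0 : 0 <= 4 * r1sq x y * w + e.
  by have := r1sq_ge4 x y; have := mulr_ge0 w_ge0 (sqr_ge0 x); nra.
rewrite -(ger0_norm bound_ge0) -sqrtr_sqr; apply: ler_wsqrtr; rewrite -subr_ge0.
have -> : (4 * r1sq x y * w + e) ^+ 2 - Delta x y =
    16 * w ^+ 2 * (16 + 4 * x ^+ 2 + 32 * x ^+ 2 * w ^+ 2 + 4 * (x ^+ 2) ^+ 2 * w ^+ 2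
      + 16 * (x ^+ 2) ^+ 2 * (w ^+ 2) ^+ 2) + 8 * w * r1sq x y * e.
  by rewrite DeltaE -e2 /r1sq y2; ring.
have r_ge0 : 0 <= r1sq x y by have := r1sq_ge4 x y; lra.
apply: addr_ge0; last by do 3!apply: mulr_ge0 => //.
apply: mulr_ge0; first by rewrite mulr_ge0 ?sqr_ge0.
have := mulr_ge0 (sqr_ge0 x) (sqr_ge0 w).
have := mulr_ge0 (sqr_ge0 (x ^+ 2)) (sqr_ge0 w).
have := mulr_ge0 (sqr_ge0 (x ^+ 2)) (sqr_ge0 (w ^+ 2)).
by have := sqr_ge0 x; nra.
Qed.

Lemma omega_p_bounds x y : 0 < x -> x <= 2 -> 0 <= omega_p x y <= 2 * `|y|.
Proof.
move=> x_gt0 x_le2.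
have r_gt0 : 0 < 2 * r1sq x y by have := r1sq_ge4 x y; lra.
have x2_le4 : x ^+ 2 - 4 <= 0 by nra.
have := sqrt_Delta_le x y; have := sqrt_Delta_ge x y.
rewrite ler0_norm // /omega_p => s_ge s_le.
by rewrite divr_ge0 ?ler_pdivrMr /=; lra.
Qed.

Lemma omega_m_bounds x y : 2 <= x -> - (2 * `|y|) <= omega_m x y <= 0.
Proof.
move=> x_ge2.
have r_gt0 : 0 < 2 * r1sq x y by have := r1sq_ge4 x y; lra.
have x2_ge4 : 0 <= x ^+ 2 - 4 by nra.
have := sqrt_Delta_le x y; have := sqrt_Delta_ge x y.
rewrite ger0_norm // /omega_m => s_ge s_le.
by rewrite ler_pdivlMr ?ler_pdivrMr /=; lra.
Qed.

End DeltaFacts.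

Section OmegaSmoothness.
Variable R : realType.
Implicit Types p : R * R.

Definition fsqr (a : fexpr R) : fexpr R := FMul a a.

Definition Delta_fexpr : fexpr R :=
  FMul (FAdd (fsqr (FAdd FX (FConst 2))) (FMul (FConst 8) (FMul (fsqr FX) (fsqr FY))))
       (FAdd (fsqr (FAdd FX (FConst (-2)))) (FMul (FConst 8) (FMul (fsqr FX) (fsqr FY)))).

Definition r1sq_fexpr : fexpr R :=
  FAdd (FAdd (FConst 4) (fsqr FX)) (FMul (FConst 4) (FMul (fsqr FX) (fsqr FY))).

Definition omega_fexpr (sign : R) : fexpr R :=
  FMul (FAdd (FAdd (fsqr FX) (FConst (-4))) (FMul (FConst sign) (FSqrt Delta_fexpr)))
       (FInv (FMul (FConst 2) r1sq_fexpr)).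

Lemma fexpr_eval_Delta p : fexpr_eval Delta_fexpr p = Delta p.1 p.2.
Proof. by rewrite /Delta /=; ring. Qed.

Lemma fexpr_eval_r1sq p : fexpr_eval r1sq_fexpr p = r1sq p.1 p.2.
Proof. by rewrite /r1sq /=; ring. Qed.

Lemma omega_p2_fexpr p : omega_p2 p = fexpr_eval (omega_fexpr 1) p.
Proof. by rewrite /omega_p2 /omega_p -fexpr_eval_Delta -fexpr_eval_r1sq /= expr2; ring. Qed.

Lemma omega_m2_fexpr p : omega_m2 p = fexpr_eval (omega_fexpr (-1)) p.
Proof. by rewrite /omega_m2 /omega_m -fexpr_eval_Delta -fexpr_eval_r1sq /= expr2; ring. Qed.

Definition Delta_pos : set (R * R) := [set p | 0 < Delta p.1 p.2].

Lemma open_Delta_pos : open Delta_pos.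
Proof.
rewrite openE => p Dp; have : fexpr_dom (FSqrt Delta_fexpr) p.
  by split; [do !split | rewrite fexpr_eval_Delta].
by move/fexpr_dom_near; apply: filterS => q [_]; rewrite fexpr_eval_Delta.
Qed.

Lemma fexpr_dom_omega sign p : Delta_pos p -> fexpr_dom (omega_fexpr sign) p.
Proof.
move=> Dp; have D_gt0 : 0 < fexpr_eval Delta_fexpr p by rewrite fexpr_eval_Delta.
have r_neq0 : 2 * fexpr_eval r1sq_fexpr p != 0.
  by rewrite fexpr_eval_r1sq mulf_neq0 // gt_eqF // (lt_le_trans _ (r1sq_ge4 _ _)).
by do !split.
Qed.

Lemma regionR_setD_p0_sub : @regionR R `\ @p0 R `<=` Delta_pos.
Proof. by case=> x y [[/= x_gt0 _] xy_neq]; exact: Delta_gt0. Qed.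

Lemma omega_smooth : exists U : set (R * R),
  (@regionR R `\ @p0 R `<=` U) /\ smooth_on U (@omega_p2 R) /\ smooth_on U (@omega_m2 R).
Proof.
exists Delta_pos; split; first exact: regionR_setD_p0_sub.
split; split=> [|n]; try exact: open_Delta_pos.
- apply: (smooth_n_fexpr _ open_Delta_pos (fexpr_dom_omega 1)) => p _.
  exact: omega_p2_fexpr.
- apply: (smooth_n_fexpr _ open_Delta_pos (fexpr_dom_omega (-1))) => p _.
  exact: omega_m2_fexpr.
Qed.

End OmegaSmoothness.

Section NearP0.
Variable R : realType.

Definition omega_lead_rem (x y t : R) : R :=
  x * (x - 2) ^+ 2 + 4 * x ^+ 2 * y ^+ 2 * (x - 2) + t * ((x - 2) * (x + 2) + 4 * x ^+ 2 * y ^+ 2).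

Lemma omega_shape_sub_lead (x y s t : R) :
  (x ^+ 2 - 4 + s) / (2 * r1sq x y) - ((x - 2) + t) / 4 =
  (2 * (s - 4 * t) - omega_lead_rem x y t) / (4 * r1sq x y).
Proof.
have : r1sq x y != 0 by rewrite gt_eqF // (lt_le_trans _ (r1sq_ge4 x y)).
by rewrite /omega_lead_rem /r1sq => r_neq0; field; rewrite ?mulf_neq0.
Qed.

Lemma Delta_near_p0E (x y : R) : Delta x y =
  (16 + ((x - 2) * (x + 6) + 8 * x ^+ 2 * y ^+ 2)) *
  ((x - 2) ^+ 2 + 32 * y ^+ 2 + 8 * y ^+ 2 * (x - 2) * (x + 2)).
Proof. by rewrite /Delta; ring. Qed.

Variables x y : R.
Hypothesis near_p0 : (x - 2) ^+ 2 + y ^+ 2 < 1 / 100.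
(* [lra] does not use section hypotheses, hence the explicit [have := near_p0]. *)

Let q : R := Num.sqrt ((x - 2) ^+ 2 + 32 * y ^+ 2).

Lemma near_p0_scale_ge0 : 0 <= q. Proof. exact: sqrtr_ge0. Qed.

Lemma sqr_near_p0_scale : q ^+ 2 = (x - 2) ^+ 2 + 32 * y ^+ 2.
Proof. by rewrite sqr_sqrtr //; have := sqr_ge0 y; have := sqr_ge0 (x - 2); lra. Qed.

Lemma near_p0_scale_le1 : q <= 1.
Proof. by rewrite -sqrtr1 ler_wsqrtr //; have := sqr_ge0 (x - 2); have := near_p0; lra. Qed.

Lemma norm_x_sub2_le_scale : `|x - 2| <= q.
Proof. by rewrite -sqrtr_sqr ler_wsqrtr //; have := sqr_ge0 y; lra. Qed.

Lemma norm_x_sub2_lt : `|x - 2| < 1 / 10.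
Proof.
have : (x - 2) ^+ 2 < 1 / 100 by have := sqr_ge0 y; have := near_p0; lra.
by rewrite ltr_norml => z2_lt; apply/andP; split; nra.
Qed.

Lemma x2y2_le_scale : x ^+ 2 * y ^+ 2 <= q ^+ 2 / 7.
Proof.
have /ltr_normlP[z_gt z_lt] := norm_x_sub2_lt.
have x2_le : x ^+ 2 <= 441 / 100 by nra.
have := sqr_near_p0_scale; have := sqr_ge0 (x - 2); have := sqr_ge0 y.
by nra.
Qed.

Lemma Delta_factor1_dev_le : `|(x - 2) * (x + 6) + 8 * x ^+ 2 * y ^+ 2| <= 11 * q.
Proof.
have /ler_normlP[z_ge z_le] := norm_x_sub2_le_scale.
have /ltr_normlP[z_gt z_lt] := norm_x_sub2_lt.
have := x2y2_le_scale; have := near_p0_scale_le1; have := near_p0_scale_ge0.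
have := mulr_ge0 (sqr_ge0 x) (sqr_ge0 y).
rewrite ler_norml => *; apply/andP; split; nra.
Qed.

Lemma Delta_factor2_dev_le : `|8 * y ^+ 2 * (x - 2) * (x + 2)| <= 2 * q ^+ 3.
Proof.
have /ler_normlP[z_ge z_le] := norm_x_sub2_le_scale.
have /ltr_normlP[z_gt z_lt] := norm_x_sub2_lt.
have near_p0_scale_ge0 := near_p0_scale_ge0; have := sqr_near_p0_scale; have := sqr_ge0 y; have := sqr_ge0 (x - 2) => *.
have c_ge0 : 0 <= 8 * y ^+ 2 * (x + 2) by nra.
have c_le : 8 * y ^+ 2 * (x + 2) <= 2 * q ^+ 2 by nra.
have -> : 8 * y ^+ 2 * (x - 2) * (x + 2) = 8 * y ^+ 2 * (x + 2) * (x - 2) by ring.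
have -> : 2 * q ^+ 3 = 2 * q ^+ 2 * q by ring.
by rewrite normrM ger0_norm // ler_pM // norm_x_sub2_le_scale.
Qed.

Lemma sqrt_Delta_sub_bound : `|Num.sqrt (Delta x y) - 4 * q| <= 17 * q ^+ 2.
Proof.
apply: (sqrt_perturb_bound near_p0_scale_ge0 near_p0_scale_le1 Delta_factor1_dev_le Delta_factor2_dev_le).
  exact: sqrtr_ge0.
by rewrite sqr_sqrtr ?Delta_ge0 // Delta_near_p0E sqr_near_p0_scale mulrA.
Qed.

Lemma omega_lead_rem_bound (t : R) : `|t| = q -> `|omega_lead_rem x y t| <= 8 * q ^+ 2.
Proof.
move=> t_q; have /ler_normlP[z_ge z_le] := norm_x_sub2_le_scale.
have /ltr_normlP[z_gt z_lt] := norm_x_sub2_lt.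
have near_p0_scale_ge0 := near_p0_scale_ge0; have := x2y2_le_scale; have := near_p0_scale_le1.
have := mulr_ge0 (sqr_ge0 x) (sqr_ge0 y) => *.
rewrite /omega_lead_rem (le_trans (ler_normD _ _)) //.
have first_le : `|x * (x - 2) ^+ 2 + 4 * x ^+ 2 * y ^+ 2 * (x - 2)| <= 3 * q ^+ 2.
  have := sqr_near_p0_scale; have := sqr_ge0 (x - 2); have := sqr_ge0 y => *.
  have p1 : 0 <= (21 / 10 - x) * (x - 2) ^+ 2 by apply: mulr_ge0; [lra | exact: sqr_ge0].
  have p2 : 0 <= x * (x - 2) ^+ 2 by apply: mulr_ge0; [lra | exact: sqr_ge0].
  have p3 : 0 <= x ^+ 2 * y ^+ 2 * (1 / 10 - (x - 2)) by apply: mulr_ge0; lra.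
  have p4 : 0 <= x ^+ 2 * y ^+ 2 * (1 / 10 + (x - 2)) by apply: mulr_ge0; lra.
  by rewrite ler_norml; apply/andP; split; lra.
have second_le : `|(x - 2) * (x + 2) + 4 * x ^+ 2 * y ^+ 2| <= 5 * q.
  by rewrite ler_norml; apply/andP; split; nra.
rewrite normrM t_q.
have := ler_wpM2l near_p0_scale_ge0 second_le.
by lra.
Qed.

Lemma omega_shape_asymptotics (s t : R) : `|t| = q -> `|s - 4 * t| <= 17 * q ^+ 2 ->
  `|(x ^+ 2 - 4 + s) / (2 * r1sq x y) - ((x - 2) + t) / 4| <= 3 * q ^+ 2.
Proof.
move=> t_q s_le; have r_ge4 := r1sq_ge4 x y.
have r4_gt0 : 0 < 4 * r1sq x y by lra.
have rem_le := omega_lead_rem_bound t_q.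
rewrite omega_shape_sub_lead normrM normfV (gtr0_norm r4_gt0) ler_pdivrMr //.
rewrite (le_trans (ler_normB _ _)) // normrM (@ger0_norm _ 2) //.
by have := ler_wpM2r (sqr_ge0 q) r_ge4; have := sqr_ge0 q; lra.
Qed.

Lemma omega_asymptotics :
  `|omega_p x y - ((x - 2) + q) / 4| <= 3 * ((x - 2) ^+ 2 + 32 * y ^+ 2) /\
  `|omega_m x y - ((x - 2) - q) / 4| <= 3 * ((x - 2) ^+ 2 + 32 * y ^+ 2).
Proof.
rewrite -sqr_near_p0_scale; split; apply: omega_shape_asymptotics.
- exact: ger0_norm near_p0_scale_ge0.
- exact: sqrt_Delta_sub_bound.
- by rewrite normrN ger0_norm ?near_p0_scale_ge0.
- by rewrite mulrN opprK addrC -opprB normrN sqrt_Delta_sub_bound.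
Qed.

End NearP0.

Section Wedge.
Variable R : realType.

Lemma omega_wedge_lower_bound (x y : R) : `|y| <= 1 / 10 -> `|x - 2| / 10 <= `|y| ->
  1 / 100 * `|y| <= `|omega_p x y| /\ 1 / 100 * `|y| <= `|omega_m x y|.
Proof.
move=> y_le z_le; have y_ge0 := normr_ge0 y.
have y2 : y ^+ 2 = `|y| ^+ 2 by rewrite real_normK ?num_real.
have /ler_normlP[z_ge z_le'] : `|x - 2| <= 10 * `|y|.
  by move: z_le; rewrite ler_pdivrMr // mulrC.
have x2_le : `|x ^+ 2 - 4| <= 50 * `|y|.
  have p1 : 0 <= (10 * `|y| - (x - 2)) * (x + 2) by apply: mulr_ge0; lra.
  have p2 : 0 <= (10 * `|y| + (x - 2)) * (x + 2) by apply: mulr_ge0; lra.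
  have p3 : 0 <= `|y| * (5 - (x + 2)) by apply: mulr_ge0; lra.
  by rewrite ler_norml; apply/andP; split; nra.
have x2_bounds : 1 <= x ^+ 2 <= 9 by apply/andP; split; nra.
have r_le : r1sq x y <= 27 / 2.
  by rewrite /r1sq y2; have := mulr_ge0 (sqr_ge0 x) (sqr_ge0 `|y|); nra.
have s_le : Num.sqrt (Delta x y) <= 104 * `|y|.
  apply: le_trans (sqrt_Delta_le x y) _.
  by have := ler_wpM2l y_ge0 r_le; lra.
apply: conjugate_quot_lower_bound; rewrite ?r1sq_ge4 ?sqrtr_ge0 //.
rewrite sqr_sqrtr ?Delta_ge0 // DeltaE addrAC subrr add0r y2.
have := mulr_ge0 (sqr_ge0 x) (sqr_ge0 `|y|).
have := sqr_ge0 (x ^+ 2 * `|y| ^+ 2).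
by nra.
Qed.
End Wedge.

Theorem lemma4p1 (R : realType) :
  (exists U : set (R * R),
      (@regionR R `\ @p0 R `<=` U) /\
      smooth_on U (@omega_p2 R) /\ smooth_on U (@omega_m2 R)) /\
  (exists C delta : R, 0 < C /\ 0 < delta /\
     forall x y : R, 0 < x -> (x - 2) ^+ 2 + y ^+ 2 < delta ->
       `|omega_p x y - ((x - 2) + Num.sqrt ((x - 2) ^+ 2 + 32 * y ^+ 2)) / 4|
           <= C * ((x - 2) ^+ 2 + 32 * y ^+ 2) /\
       `|omega_m x y - ((x - 2) - Num.sqrt ((x - 2) ^+ 2 + 32 * y ^+ 2)) / 4|
           <= C * ((x - 2) ^+ 2 + 32 * y ^+ 2)) /\
  (forall x y : R, regionRp (x, y) -> 0 <= omega_p x y <= 2 * `|y|) /\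
  (forall x y : R, regionRm (x, y) -> - (2 * `|y|) <= omega_m x y <= 0) /\
  (forall a : R, 0 < a -> a <= 1 / 10 ->
     exists C : R, 0 < C /\
       forall x y : R, wedge a (x, y) ->
         C * `|y| <= `|omega_p x y| /\ C * `|y| <= `|omega_m x y|).
Proof.
split; first exact: omega_smooth.
split.
  exists 3, (1 / 100); do 2!(split; first lra).
  by move=> x y _ near_p0; exact: omega_asymptotics.
split; first by move=> x y [[/= x_gt0 _] /= x_le2]; exact: omega_p_bounds.
split; first by move=> x y [_ /= x_ge2]; exact: omega_m_bounds.
move=> a _ a_le; exists (1 / 100); split; first lra.
by move=> x y [/= y_le z_le]; apply: omega_wedge_lower_bound => //; lra.
Qed.
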